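(* Let $V$ be a finite-dimensional vector space of dimension $n$ over a field $\mathbb{K}$ of characteristic $0$, and let $R=\mathbb{K}[x_1,\dots,x_n,y_1,\dots,y_n,z_1,\dots,z_n]$. Let $J_1(V)=(\mathbf{y},\mathbf{z})$, $J_2(V)=(\mathbf{x},\mathbf{z})$, $J_3(V)=(\mathbf{x},\mathbf{y})$, where $(\mathbf{x},\mathbf{y})$ denotes the ideal generated by $x_1,\dots,x_n,y_1,\dots,y_n$, etc. Then the ideal $$\mathcal{I}_{\mathcal{A}}(V)=J_1(V)\cap J_2(V)\cap J_3(V)$$ has Castelnuovo–Mumford regularity two.
   Context: This is the intersection ideal associated with the arrangement $\mathcal{A}$ of the three coordinate axes in $\mathbb{K}^3$, tensored with $V^*$. The Castelnuovo–Mumford regularity of a graded $R$-module $M$ is the least $s$ such that $\operatorname{Tor}_i^R(M,\mathbb{K})$ vanishes in degrees $>s+i$ for all $i$. *)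

From HB Require Import structures.
From mathcomp Require Import all_boot all_order all_algebra.
From mathcomp Require Import mpoly.
Set Implicit Arguments. Unset Strict Implicit. Unset Printing Implicit Defensive.
Import Order.TTheory GRing.Theory Num.Theory.
Local Open Scope ring_scope.

Section Defs.
Variable (K : fieldType) (N : nat).
Local Notation R := {mpoly K[N]}.

Definition homogeneous (d : nat) (p : R) : Prop :=
  forall m, m \in msupp p -> mdeg m = d.

Definition var_ideal (S : pred 'I_N) (p : R) : Prop :=
  exists c : 'I_N -> R, p = \sum_(v < N | S v) c v * 'X_v.

(* Koszul complex K(X_0..X_{N-1}; R) tensored with an ideal I (seen as a
   graded R-module).  A chain is F : {set 'I_N} -> R, F S being the
   coefficient of e_S.  Differential:
   d(e_S (x) f) = sum_{k in S} (-1)^{#{l in S | l < k}} X_k e_{S\k} (x) f. *)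
Definition koszul_d (F : {set 'I_N} -> R) (T : {set 'I_N}) : R :=
  \sum_(k < N | k \notin T)
     (-1) ^+ #|[set l in T | (l < k)%N]| * 'X_k * F (k |: T).

(* F is a chain of K(x) (x) I of homological degree i and internal degree j:
   supported on sets of size i, with coefficients in I homogeneous of
   degree j - i (internal degree of e_S (x) f is |S| + deg f). *)
Definition koszul_chain (I : R -> Prop) (i j : nat) (F : {set 'I_N} -> R) : Prop :=
  forall S : {set 'I_N},
    I (F S) /\
    (if #|S| == i then (i <= j)%N \/ F S = 0 else F S = 0) /\
    homogeneous (j - i) (F S).

(* Tor_i^R(I, K)_j = 0, computed as the degree-j part of the i-th homology of
   the Koszul complex (the graded free resolution of K = R/(X)) tensored with I. *)
Definition tor_vanishes (I : R -> Prop) (i j : nat) : Prop :=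
  forall F, koszul_chain I i j F -> koszul_d F =1 (fun _ => 0) ->
    exists G, koszul_chain I i.+1 j G /\ koszul_d G =1 F.

Definition reg_bound (I : R -> Prop) (s : int) : Prop :=
  forall i j : nat, (s + i%:Z < j%:Z)%R -> tor_vanishes I i j.

Definition cm_regularity_is (I : R -> Prop) (s : int) : Prop :=
  reg_bound I s /\ forall s', reg_bound I s' -> (s <= s')%R.

End Defs.

(* R = K[x_1..x_n, y_1..y_n, z_1..z_n] is {mpoly K[3 * n]}; the variable of
   block k (k = 0: x, 1: y, 2: z) and index i is X_(mxvec_index k i). *)
Definition in_block (n : nat) (k : 'I_3) (v : 'I_(3 * n)) : bool :=
  [exists i : 'I_n, v == mxvec_index k i].

(* J_{k+1}(V): generated by the variables of the two blocks other than k *)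
Definition J (K : fieldType) (n : nat) (k : 'I_3) : {mpoly K[3 * n]} -> Prop :=
  var_ideal (fun v => ~~ in_block k v).

Definition IA (K : fieldType) (n : nat) (p : {mpoly K[3 * n]}) : Prop :=
  forall k : 'I_3, @J K n k p.

From HB Require Import structures.
From mathcomp Require Import all_boot all_order all_algebra.
From mathcomp Require Import mpoly ring zify.
Set Implicit Arguments. Unset Strict Implicit. Unset Printing Implicit Defensive.
Import Order.TTheory GRing.Theory Num.Theory.
Local Open Scope ring_scope.

(* Tor_i(I, K)_j is the degree-j homology of the Koszul complex K(x) (x) I.
   Contraction with the partial derivatives is a homotopy h with
   dh + hd = E + |T| on e_T, E the Euler operator, so over a field of
   characteristic 0 a Koszul cycle F of internal degree j is the boundary of
   h F / j, which however has coefficients in R rather than in I.  A polynomial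
   lies in I = J_1 cap J_2 cap J_3 iff it has no monomial involving the
   variables of a single block only.  For each block c, the block-c-pure part
   w_c of h F / j is a cycle of the Koszul complex on the block-c variables, so
   w_c = d_c u_c by the same homotopy; subtracting d u_c for every c leaves a
   chain with coefficients in I and boundary F.  The derivatives of a
   block-pure polynomial of degree j - i - 1 >= 2 have no pure monomial of
   another block, which is where j >= i + 3 is needed.  Conversely x_1 y_1 is a
   minimal generator of degree 2 of I, since I contains no linear form. *)

Section MonomialParts.
Variables (K : comNzRingType) (N : nat).
Local Notation R := {mpoly K[N]}.
Implicit Types (p q : R) (m : 'X_{1..N}) (B : pred 'I_N).

Lemma mcoeff_Xmul (k : 'I_N) p m :
  ('X_k * p)@_m = if (0 < m k)%N then p@_(m - U_(k))%MM else 0.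
Proof.
rewrite mulrC; case: ifP => hk.
  have {1}-> : m = (U_(k) + (m - U_(k)))%MM by rewrite addmC submK // lep1mP -lt0n.
  by rewrite mcoeffMX.
apply/eqP; rewrite mcoeff_eq0 (perm_mem (msuppMX _ _)); apply/negP.
by case/mapP => m' _ em; move: hk; rewrite em mnmDE mnm1E eqxx.
Qed.

Lemma mcoeff_XmulD (k : 'I_N) p m : ('X_k * p)@_(m + U_(k)) = p@_m.
Proof. by rewrite mulrC addmC mcoeffMX. Qed.

Lemma dhomog_Xmul d (k : 'I_N) p : p \is d.-homog -> 'X_k * p \is d.+1.-homog.
Proof. by move=> hp; rewrite -add1n; apply: dhomogM hp; rewrite dhomogX /= mdeg1. Qed.

Lemma dhomog_mderiv d (k : 'I_N) p : p \is d.-homog -> p^`M(k) \is d.-1.-homog.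
Proof.
move=> hp; apply/dhomogP => m; rewrite mcoeff_msupp mcoeff_mderiv.
apply: contraNeq => hm; rewrite (dhomog_nemf_coeff hp) ?mul0rn // /=.
by rewrite mdegD mdeg1 addn1; apply: contra hm => /eqP <-.
Qed.

Definition mnm_within B m := [forall v, (m v != 0%N) ==> B v].

Definition mpart B p : R :=
  \sum_(m <- msupp p) (if mnm_within B m then p@_m else 0) *: 'X_[m].

Lemma mcoeff_mpart B p m :
  (mpart B p)@_m = if mnm_within B m then p@_m else 0.
Proof.
rewrite raddf_sum /=.
set c := if mnm_within B m then _ else _.
rewrite (eq_bigr (fun m' => if m' == m then c else 0)); last first.
  move=> m' _; rewrite mcoeffZ mcoeffX /c.
  by case: eqVneq => [->|_]; rewrite ?mulr1 ?mulr0.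
rewrite -big_mkcond /=; case: (boolP (m \in msupp p)) => hm.
  by rewrite -big_filter filter_pred1_uniq ?msupp_uniq // big_seq1.
rewrite big1_seq => [|m' /andP[/eqP-> hm']]; last by rewrite hm' in hm.
by move: hm; rewrite -mcoeff_eq0 /c => /eqP->; case: ifP.
Qed.

Lemma mpart_is_linear B : linear (mpart B).
Proof.
move=> a p q; apply/mpolyP => m.
by rewrite mcoeffD mcoeffZ !mcoeff_mpart mcoeffD mcoeffZ; case: ifP; rewrite ?mulr0 ?addr0.
Qed.

HB.instance Definition _ B :=
  GRing.isLinear.Build K R R _ (mpart B) (mpart_is_linear B).

Lemma mnm_withinDU B (k : 'I_N) m :
  mnm_within B (m + U_(k))%MM = B k && mnm_within B m.
Proof.
apply/forallP/andP => [H|[Bk /forallP H] v].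
  split; first by apply: (implyP (H k)); rewrite mnmDE mnm1E eqxx addn1.
  apply/forallP => v; apply/implyP => hv; apply: (implyP (H v)).
  by rewrite mnmDE addn_eq0 negb_and hv.
apply/implyP; rewrite mnmDE mnm1E addn_eq0 negb_and.
by case/orP; [exact: (implyP (H v)) | case: (eqVneq k v) => [<-|]].
Qed.

Lemma mpart_Xmul B (k : 'I_N) p :
  mpart B ('X_k * p) = if B k then 'X_k * mpart B p else 0.
Proof.
apply/mpolyP => m; rewrite mcoeff_mpart.
have [hk|] := posnP (m k).
  rewrite mcoeff_Xmul hk if_same.
  by case: ifP; rewrite ?mcoeff_Xmul ?hk ?mcoeff0.
rewrite lt0n -lep1mP => /submK <-; rewrite mnm_withinDU mcoeff_XmulD.
by case: (B k); rewrite ?mcoeff_XmulD ?mcoeff_mpart ?mcoeff0.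
Qed.

Lemma mpart_dhomog d B p : p \is d.-homog -> mpart B p \is d.-homog.
Proof.
move=> hp; apply/dhomogP => m; rewrite mcoeff_msupp mcoeff_mpart.
by case: ifP => _; [rewrite -mcoeff_msupp; apply: dhomog_mf | rewrite eqxx].
Qed.

Lemma mpartT p : mpart predT p = p.
Proof.
apply/mpolyP => m; rewrite mcoeff_mpart; case: ifP => // /negbT/forallPn[v].
by rewrite implybT.
Qed.

Lemma mpartK B p : mpart B (mpart B p) = mpart B p.
Proof. by apply/mpolyP => m; rewrite !mcoeff_mpart; case: (mnm_within B m). Qed.

Lemma mpart_mderiv B (k : 'I_N) p :
  mpart B p = p -> mpart B p^`M(k) = p^`M(k).
Proof.
move=> Bp; apply/mpolyP => m; rewrite mcoeff_mpart mcoeff_mderiv.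
by case: ifP => // Bm; rewrite -{1}Bp mcoeff_mpart mnm_withinDU Bm andbF mul0rn.
Qed.

Lemma mpart_disjoint B B' d q :
  (forall v, B v -> B' v -> False) -> mpart B' q = q -> q \is d.-homog ->
  d != 0%N -> mpart B q = 0.
Proof.
move=> disj B'q hq d0; apply/mpolyP => m; rewrite mcoeff_mpart mcoeff0.
case: ifP => // Bm; rewrite -B'q mcoeff_mpart; case: ifP => // B'm.
have -> : m = 0%MM.
  apply/mnmP => v; rewrite mnmE; apply/eqP/contraT => hv.
  by case: (disj v (implyP (forallP Bm v) hv) (implyP (forallP B'm v) hv)).
by rewrite (dhomog_nemf_coeff hq) //= mdeg0 eq_sym.
Qed.

Lemma mcoeff_sum_Xmderiv B p m :
  (\sum_(k < N | B k) 'X_k * p^`M(k))@_m = p@_m *+ (\sum_(k < N | B k) m k)%N.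
Proof.
rewrite raddf_sum /= -sumrMnr; apply: eq_bigr => k _.
rewrite mcoeff_Xmul; case: posnP => [->|hk]; first by rewrite mulr0n.
by rewrite mcoeff_mderiv submK ?lep1mP -?lt0n // mnmBE mnm1E eqxx subn1 prednK.
Qed.

Lemma euler_mpart B d p : p \is d.-homog -> mpart B p = p ->
  \sum_(k < N | B k) 'X_k * p^`M(k) = d%:R *: p.
Proof.
move=> hp Bp; apply/mpolyP => m; rewrite mcoeff_sum_Xmderiv mcoeffZ.
have [->|p_m] := eqVneq p@_m 0; first by rewrite mul0rn mulr0.
have /(dhomog_mf hp) <- : m \in msupp p by rewrite mcoeff_msupp.
rewrite /= mdegE mulr_natl; congr (_ *+ _).
have Bm : mnm_within B m.
  by move: p_m; rewrite -Bp mcoeff_mpart; case: ifP => //; rewrite eqxx.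
rewrite [RHS](bigID B) /= [X in (_ + X)%N]big1 ?addn0 // => v Bv.
by apply/eqP; apply: contraNT Bv; apply: (implyP (forallP Bm v)).
Qed.

End MonomialParts.

Lemma sumr_antisym (V : zmodType) n (a : 'I_n -> 'I_n -> V) :
  (forall k, a k k = 0) -> (forall k l, a l k = - a k l) ->
  \sum_k \sum_l a k l = 0.
Proof.
move=> a0 aN; pose sw (p : 'I_n * 'I_n) := (p.2, p.1).
have swK : involutive sw by case.
rewrite pair_bigA /= (bigID (fun p : 'I_n * 'I_n => p.1 < p.2)%N) /=.
rewrite [X in _ + X](bigID (fun p : 'I_n * 'I_n => p.2 < p.1)%N) /=.
rewrite [X in _ + (_ + X)]big1 ?addr0; last first.
  move=> [k l] /=; rewrite -!leqNgt => /andP[lk kl].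
  by rewrite (@val_inj _ _ _ k l) ?a0 //; apply/eqP; rewrite eqn_leq kl lk.
rewrite [X in _ + X](reindex_inj (inv_inj swK)) /= -[X in _ + X]opprK -sumrN.
rewrite [X in _ - X](eq_big (fun p : 'I_n * 'I_n => p.1 < p.2)%N (fun p => a p.1 p.2)).
- by rewrite subrr.
- by move=> [k l] /=; case: ltngtP.
- by move=> [k l] _ /=; rewrite aN opprK.
Qed.

Section KoszulHomotopy.
Variables (K : comNzRingType) (N : nat).
Local Notation R := {mpoly K[N]}.
Local Notation chain := ({set 'I_N} -> R).
Implicit Types (F : chain) (T : {set 'I_N}) (B : pred 'I_N) (k l : 'I_N).

Definition ksign T k : R := (-1) ^+ #|[set l in T | (l < k)%N]|.

Definition kdiff B F T : R :=
  \sum_(k < N | (k \notin T) && B k) ksign T k * 'X_k * F (k |: T).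

Definition khtp B F T : R :=
  \sum_(l < N | (l \in T) && B l) ksign (T :\ l) l * (F (T :\ l))^`M(l).

Definition kcount B T := #|[set l in T | B l]|.

Lemma ksignU1 T k l : l \notin T ->
  ksign (l |: T) k = (-1) ^+ (l < k)%N * ksign T k.
Proof.
move=> lT; rewrite /ksign -exprD; congr (_ ^+ _).
have -> : [set x in l |: T | (x < k)%N] =
    if (l < k)%N then l |: [set x in T | (x < k)%N] else [set x in T | (x < k)%N].
  apply/setP => x; rewrite !inE; case: ifP => lk; rewrite ?inE;
  by case: (eqVneq x l) => [->|] //=; rewrite ?lk ?(negbTE lT).
by case: ifP => lk; rewrite ?add0n // cardsU1 inE (negbTE lT).
Qed.

Lemma ksign_sqr T k : ksign T k * ksign T k = 1.
Proof. by rewrite /ksign -exprD -signr_odd oddD addbb. Qed.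

Lemma ksign_swap T k l : l \in T -> k \notin T ->
  ksign T k * ksign (k |: (T :\ l)) l = - (ksign (T :\ l) l * ksign (T :\ l) k).
Proof.
move=> lT kT; have kl : k != l by apply: contraNneq kT => ->.
have lTl : l \notin T :\ l by rewrite !inE eqxx.
have kTl : k \notin T :\ l by rewrite !inE negb_and kT orbT.
rewrite -{1}(setD1K lT) !ksignU1 //.
case: (ltngtP l k) => [_|_|/val_inj e]; last by rewrite e eqxx in kl.
  by rewrite /= expr1 expr0; ring.
by rewrite /= expr1 expr0; ring.
Qed.

Lemma mderiv_Xmul k l (q : R) :
  ('X_k * q)^`M(l) = 'X_k * q^`M(l) + (if k == l then q else 0).
Proof.
rewrite mderivM mderivX addrC mnm1E; case: eqVneq => [->|_]; last first.
  by rewrite scale0r mul0r addr0.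
have -> : (U_(l) - U_(l))%MM = 0%MM by apply/mnmP => v; rewrite !mnmE subnn.
by rewrite mpolyX0 scale1r mul1r.
Qed.

Lemma mderiv_ksignM T k l (q : R) : (ksign T k * q)^`M(l) = ksign T k * q^`M(l).
Proof. exact: raddfMsign. Qed.

Lemma ksignX_khtpU1 B F T k : k \notin T -> B k ->
  ksign T k * 'X_k * khtp B F (k |: T) =
  'X_k * (F T)^`M(k) +
  \sum_(l < N | (l \in T) && B l)
     ksign T k * 'X_k * (ksign (k |: (T :\ l)) l * (F (k |: (T :\ l)))^`M(l)).
Proof.
move=> kT Bk; rewrite /khtp (bigD1 k) /=; last by rewrite !inE eqxx.
rewrite mulrDr setU1K //; congr (_ + _).
  by rewrite -[RHS]mul1r -(ksign_sqr T k); ring.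
rewrite mulr_sumr; apply: eq_big => l.
  by rewrite !inE; case: (eqVneq l k) => [->|] /=; rewrite ?(negbTE kT) ?andbF ?andbT.
case/andP => _ lk; suff -> : (k |: T) :\ l = k |: (T :\ l) by [].
by apply/setP => x; rewrite !inE; case: (eqVneq x k) => // ->; rewrite eq_sym lk.
Qed.

Lemma ksign_mderiv_kdiffD1 B F T l : l \in T -> B l ->
  ksign (T :\ l) l * (kdiff B F (T :\ l))^`M(l) =
  (F T + 'X_l * (F T)^`M(l)) +
  \sum_(k < N | (k \notin T) && B k)
     ksign (T :\ l) l * (ksign (T :\ l) k * 'X_k * (F (k |: (T :\ l)))^`M(l)).
Proof.
move=> lT Bl; rewrite /kdiff raddf_sum (bigD1 l) /=; last by rewrite !inE eqxx Bl.
rewrite -mulrA mderiv_ksignM mderiv_Xmul eqxx setD1K // mulrDr; congr (_ + _).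
  by rewrite -[RHS]mul1r -(ksign_sqr (T :\ l) l); ring.
rewrite mulr_sumr; apply: eq_big => k.
  by rewrite !inE; case: (eqVneq k l) => [->|] /=; rewrite ?lT ?andbF ?andbT.
case/andP => _ kl; congr (_ * _).
by rewrite -mulrA mderiv_ksignM mderiv_Xmul (negbTE kl) addr0 mulrA.
Qed.

Lemma kdiff_khtp B F T :
  kdiff B (khtp B F) T + khtp B (kdiff B F) T =
  \sum_(k < N | B k) 'X_k * (F T)^`M(k) + (kcount B T)%:R *: F T.
Proof.
rewrite {1}/kdiff {2}/khtp.
under eq_bigr => k /andP[kT Bk] do rewrite (ksignX_khtpU1 F kT Bk).
under [X in _ + X]eq_bigr => l /andP[lT Bl] do rewrite (ksign_mderiv_kdiffD1 F lT Bl).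
rewrite !big_split /=.
set C1 := \sum_(k < N | _) \sum_(l < N | _) _.
set C2 := \sum_(l < N | _) \sum_(k < N | _) _.
have -> : C2 = - C1.
  apply/eqP; rewrite -addr_eq0 /C2 exchange_big /= /C1 -big_split /=.
  apply/eqP/big1 => k /andP[kT Bk]; rewrite -big_split /=.
  apply: big1 => l /andP[lT Bl]; set D := (F _)^`M(l).
  have -> : forall a b c d : R,
      c * (d * 'X_k * D) + a * 'X_k * (b * D) = (a * b + c * d) * ('X_k * D).
    by move=> a b c d; ring.
  by rewrite ksign_swap // addNr mul0r.
have -> : \sum_(l < N | (l \in T) && B l) F T = (kcount B T)%:R *: F T.
  by rewrite scaler_nat /kcount -sumr_const; apply: eq_bigl => l; rewrite inE.
rewrite [in RHS](bigID (mem T)) /= addrC.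
under [in RHS]eq_bigl => k do rewrite andbC.
under [X in _ = _ + X + _]eq_bigl => k do rewrite andbC.
ring.
Qed.

Lemma kdiffK B F T : kdiff B (kdiff B F) T = 0.
Proof.
pose a k l : R :=
  if [&& k \notin T, l \notin k |: T, B k & B l] then
    ksign T k * 'X_k * (ksign (k |: T) l * 'X_l * F (l |: (k |: T)))
  else 0.
have -> : kdiff B (kdiff B F) T = \sum_k \sum_l a k l.
  rewrite /kdiff big_mkcond /=; apply: eq_bigr => k _.
  have [/andP[kT Bk]|nkB] := boolP ((k \notin T) && B k).
    by rewrite mulr_sumr big_mkcond /=; apply: eq_bigr => l _; rewrite /a kT Bk.
  apply/esym/big1 => l _; rewrite /a.
  by case: (k \notin T) (B k) nkB => [] [] //=; rewrite andbF.
apply: sumr_antisym => [k|k l]; first by rewrite /a setU11 andbF.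
rewrite /a !inE; case: (eqVneq l k) => [->|lk]; first by rewrite /= andbF oppr0.
case: (boolP (k \in T)) => kT /=; first by rewrite andbF oppr0.
case: (boolP (l \in T)) => lT /=; first by rewrite oppr0.
case: (B k) (B l) => [] [] /=; rewrite ?oppr0 //.
rewrite setUCA !ksignU1 //.
case: (ltngtP l k) => [_|_|/val_inj e]; last by rewrite e eqxx in lk.
  by rewrite /= expr1 expr0; ring.
by rewrite /= expr1 expr0; ring.
Qed.

Lemma eq_kdiff B F F' T : F =1 F' -> kdiff B F T = kdiff B F' T.
Proof. by move=> eFF'; apply: eq_bigr => k _; rewrite eFF'. Qed.

Lemma eq_khtp B F F' T : F =1 F' -> khtp B F T = khtp B F' T.
Proof. by move=> eFF'; apply: eq_bigr => k _; rewrite eFF'. Qed.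

Lemma kdiff0 B T : kdiff B (fun=> 0) T = 0.
Proof. by apply: big1 => k _; rewrite mulr0. Qed.

Lemma khtp0 B T : khtp B (fun=> 0) T = 0.
Proof. by apply: big1 => k _; rewrite mderiv0 mulr0. Qed.

Lemma kdiffB B F F' T : kdiff B (fun S => F S - F' S) T = kdiff B F T - kdiff B F' T.
Proof. by rewrite /kdiff -sumrB; apply: eq_bigr => k _; rewrite mulrBr. Qed.

Lemma kdiff_sum B (I : finType) (G : I -> chain) T :
  kdiff B (fun S => \sum_(c : I) G c S) T = \sum_(c : I) kdiff B (G c) T.
Proof. by rewrite /kdiff exchange_big /=; apply: eq_bigr => k _; rewrite mulr_sumr. Qed.

Lemma mpart_kdiff B F T :
  mpart B (kdiff predT F T) = kdiff B (fun S => mpart B (F S)) T.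
Proof.
rewrite /kdiff raddf_sum big_mkcond [RHS]big_mkcond /=; apply: eq_bigr => k _.
rewrite andbT; case: (k \notin T) => //=.
by rewrite -mulrA /ksign raddfMsign /= mpart_Xmul; case: (B k); rewrite ?mulr0 ?mulrA.
Qed.

Definition kchain_on F i := forall T, #|T| != i -> F T = 0.

Lemma khtp_on B F i : kchain_on F i -> kchain_on (khtp B F) i.+1.
Proof.
move=> Fi T hT; apply: big1 => l /andP[lT _]; rewrite Fi ?raddf0 ?mulr0 //.
by apply: contra hT; rewrite (cardsD1 l T) lT => /eqP ->.
Qed.

Lemma kdiff_on B F i : kchain_on F i.+1 -> kchain_on (kdiff B F) i.
Proof.
move=> Fi T hT; apply: big1 => k /andP[kT _]; rewrite Fi ?mulr0 //.
by rewrite cardsU1 kT add1n eqSS.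
Qed.

Lemma khtp_dhomog B F d :
  (forall T, F T \is d.-homog) -> forall T, khtp B F T \is d.-1.-homog.
Proof.
by move=> Fd T; apply: rpred_sum => l _; rewrite rpredMsign dhomog_mderiv.
Qed.

Lemma kdiff_dhomog B F d :
  (forall T, F T \is d.-homog) -> forall T, kdiff B F T \is d.+1.-homog.
Proof.
by move=> Fd T; apply: rpred_sum => k _; rewrite -mulrA rpredMsign dhomog_Xmul.
Qed.

Lemma mpart_khtp B B' F T :
  (forall S, mpart B (F S) = F S) -> mpart B (khtp B' F T) = khtp B' F T.
Proof.
move=> BF; rewrite raddf_sum /=; apply: eq_bigr => l _.
by rewrite /ksign raddfMsign /= mpart_mderiv.
Qed.

Lemma mpart_khtp_disjoint B B' B'' F d T :
  (forall v, B v -> B' v -> False) -> (forall S, mpart B' (F S) = F S) ->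
  (forall S, F S \is d.-homog) -> (1 < d)%N -> mpart B (khtp B'' F T) = 0.
Proof.
move=> disj B'F Fd d_gt1; rewrite raddf_sum /=; apply: big1 => l _.
have d1_neq0 : d.-1 != 0%N by case: d d_gt1 {Fd} => [|[]].
have B'F' := mpart_mderiv l (B'F (T :\ l)).
have Fd' := dhomog_mderiv l (Fd (T :\ l)).
by rewrite /ksign raddfMsign /= (mpart_disjoint disj B'F' Fd' d1_neq0) mulr0.
Qed.

End KoszulHomotopy.

Section VarIdeal.
Variables (K : fieldType) (N : nat).
Local Notation R := {mpoly K[N]}.
Implicit Types (p q : R) (S B : pred 'I_N).

Lemma var_ideal0 S : var_ideal S (0 : R).
Proof. by exists (fun=> 0); rewrite big1 // => v _; rewrite mul0r. Qed.

Lemma var_idealD S p q : var_ideal S p -> var_ideal S q -> var_ideal S (p + q).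
Proof.
case=> c1 -> [c2 ->]; exists (fun v => c1 v + c2 v).
by rewrite -big_split /=; apply: eq_bigr => v _; rewrite mulrDl.
Qed.

Lemma var_ideal_monomial S (v : 'I_N) (m : 'X_{1..N}) (a : K) :
  S v -> m v != 0%N -> var_ideal S (a *: 'X_[m] : R).
Proof.
move=> Sv mv; exists (fun w => if w == v then a *: 'X_[m - U_(v)] else 0).
rewrite (bigD1 v) //= eqxx big1 ?addr0 => [|w /andP[_ /negbTE->]]; last by rewrite mul0r.
by rewrite -scalerAl -mpolyXD submK // lep1mP.
Qed.

Lemma var_idealE B p : var_ideal (fun v => ~~ B v) p <-> mpart B p = 0.
Proof.
split=> [[c ->]|Bp0].
  by rewrite raddf_sum /=; apply: big1 => v nBv; rewrite mulrC mpart_Xmul (negbTE nBv).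
rewrite (mpolyE p); elim/big_rec: _ => [|m q _ Iq]; first exact: var_ideal0.
apply: var_idealD Iq; have := congr1 (mcoeff m) Bp0.
rewrite mcoeff_mpart mcoeff0; case: ifP => [_ ->|/negbT/forallPn[v]].
  by rewrite scale0r; apply: var_ideal0.
by rewrite negb_imply => /andP[mv nBv] _; exact: (@var_ideal_monomial _ v m _ nBv mv).
Qed.

Lemma homogeneousE d p : homogeneous d p <-> p \is d.-homog.
Proof. by split=> [H|/dhomogP]; [apply/dhomogP|]. Qed.

End VarIdeal.

Section KoszulLift.
Variables (K : fieldType) (N : nat).
Hypothesis char0 : [pchar K] =i pred0.
Local Notation R := {mpoly K[N]}.
Local Notation chain := ({set 'I_N} -> R).
Implicit Types (F : chain) (T : {set 'I_N}) (B : pred 'I_N).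

Lemma natf_neq0 k : (0 < k)%N -> (k%:R : K) != 0.
Proof. by move=> k_gt0; have [h _] := pcharf0P K; rewrite (h char0 k) -lt0n. Qed.

Lemma koszul_dE F T : koszul_d F T = kdiff predT F T.
Proof. by apply: eq_bigl => k; rewrite andbT. Qed.

(* The scalar comes from [kdiff_khtp]: for [F] of degree [e] in the variables of
   [B], [kdiff B \o khtp B + khtp B \o kdiff B] acts on [F (T :\ l)], [l] in [B],
   by [e + kcount B T - 1]; the truncated [.-1] only matters when [khtp B F T]
   is an empty sum. *)
Definition klift B e F T : R := ((e + kcount B T).-1%:R)^-1 *: khtp B F T.

Lemma kdiff_klift B e F :
  (0 < e)%N -> (forall T, mpart B (F T) = F T) -> (forall T, F T \is e.-homog) ->
  (forall T, kdiff B F T = 0) -> forall T, kdiff B (klift B e F) T = F T.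
Proof.
move=> e_gt0 BF Fe dF T.
have -> : kdiff B (klift B e F) T =
    ((e + kcount B T)%:R)^-1 *: kdiff B (khtp B F) T.
  rewrite /kdiff scaler_sumr; apply: eq_bigr => k /andP[kT Bk].
  rewrite /klift; suff -> : kcount B (k |: T) = (kcount B T).+1 by rewrite addnS scalerAr.
  rewrite /kcount (_ : [set l in k |: T | B l] = k |: [set l in T | B l]).
    by rewrite cardsU1 inE (negbTE kT).
  by apply/setP => x; rewrite !inE; case: eqVneq => [->|].
have := kdiff_khtp B F T; rewrite (eq_khtp _ _ dF) khtp0 addr0 => ->.
rewrite (euler_mpart (Fe T) (BF T)) -scalerDl -natrD scalerA mulVf ?scale1r //.
by apply: natf_neq0; rewrite addn_gt0 e_gt0.
Qed.

Lemma koszul_chainE (I : R -> Prop) i j F : (i <= j)%N ->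
  koszul_chain I i j F <->
  [/\ kchain_on F i, forall S, F S \is (j - i).-homog & forall S, I (F S)].
Proof.
move=> le_ij; split=> [H | [Fi Fh FI] S].
  split=> S; have [IF [supp /homogeneousE hom]] := H S => // /negbTE hS.
  by rewrite hS in supp.
split; [exact: FI | split; last exact/homogeneousE].
by case: eqVneq => [_|/Fi //]; left.
Qed.

End KoszulLift.

Section BlockIdeal.
Variables (K : fieldType) (N : nat) (C : finType) (blk : C -> pred 'I_N).
Hypothesis blk_disjoint : forall b c v, blk b v -> blk c v -> b = c.
Local Notation R := {mpoly K[N]}.
Local Notation chain := ({set 'I_N} -> R).
Implicit Types (p : R) (F y : chain) (T : {set 'I_N}).

Definition block_ideal p : Prop := forall c, var_ideal (fun v => ~~ blk c v) p.

Lemma block_idealE p : block_ideal p <-> forall c, mpart (blk c) p = 0.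
Proof. by split=> Ip c; apply/var_idealE. Qed.

(* Removes the block-pure monomials of [y], of degree [e], modulo boundaries. *)
Definition block_correction e y T : R :=
  y T - \sum_c kdiff predT (klift (blk c) e (fun S => mpart (blk c) (y S))) T.

Lemma kdiff_block_correction e y T :
  kdiff predT (block_correction e y) T = kdiff predT y T.
Proof.
rewrite kdiffB (kdiff_sum _ (fun c => kdiff predT _)) big1 ?subr0 // => c _.
exact: kdiffK.
Qed.

Lemma block_correction_on e y i :
  kchain_on y i.+1 -> kchain_on (block_correction e y) i.+1.
Proof.
move=> yi T hT; rewrite /block_correction yi // big1 ?subr0 // => c _.
have wi : kchain_on (fun S => mpart (blk c) (y S)) i.+1.
  by move=> S hS; rewrite yi ?raddf0.
apply: (@kdiff_on _ _ predT _ i.+1) hT => S hS.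
by rewrite /klift (khtp_on _ wi hS) scaler0.
Qed.

Lemma block_correction_dhomog e y : (0 < e)%N ->
  (forall T, y T \is e.-homog) -> forall T, block_correction e y T \is e.-homog.
Proof.
move=> e_gt0 ye T; rewrite rpredB // rpred_sum // => c _.
rewrite -(prednK e_gt0); apply: kdiff_dhomog => S; rewrite rpredZ //.
by apply: khtp_dhomog => S'; rewrite mpart_dhomog.
Qed.

Hypothesis char0 : [pchar K] =i pred0.

Lemma block_correction_ideal e y : (1 < e)%N ->
  (forall T, y T \is e.-homog) -> (forall T, block_ideal (kdiff predT y T)) ->
  forall T, block_ideal (block_correction e y T).
Proof.
move=> e_gt1 ye dyI T; apply/block_idealE => c.
pose w b S := mpart (blk b) (y S).
pose u b := klift (blk b) e (w b).
have wK b S : mpart (blk b) (w b S) = w b S by apply: mpartK.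
have we b S : w b S \is e.-homog by apply: mpart_dhomog.
have other b : b != c -> mpart (blk c) (kdiff predT (u b) T) = 0.
  move=> bc; rewrite mpart_kdiff (eq_kdiff _ (F' := fun=> 0)) ?kdiff0 // => S.
  rewrite /u /klift linearZ /= (mpart_khtp_disjoint _ _ _ (wK b) (we b)) ?scaler0 //.
  by move=> v cv bv; rewrite (blk_disjoint bv cv) eqxx in bc.
have same : mpart (blk c) (kdiff predT (u c) T) = w c T.
  rewrite mpart_kdiff (eq_kdiff _ (F' := u c)) => [|S]; last first.
    by rewrite /u /klift linearZ /= mpart_khtp.
  apply: kdiff_klift => // [|S]; first exact: ltnW.
  by rewrite /w -mpart_kdiff; have /block_idealE := dyI S; apply.
rewrite raddfB (raddf_sum (mpart (blk c))) (bigD1 c) // big1 => [|b]; last exact: other.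
by rewrite /= addr0 same subrr.
Qed.

Lemma block_ideal_tor_vanishes i j :
  (i + 3 <= j)%N -> tor_vanishes block_ideal i j.
Proof.
move=> ij F /koszul_chainE-/(_ (leq_trans (leq_addr 3 i) ij)) [Fi Fh FI] dF.
set d := (j - i)%N.
pose y := klift predT d F.
have dy T : kdiff predT y T = F T.
  apply: kdiff_klift => // [|S|S]; first by rewrite /d; lia.
    exact: mpartT.
  by rewrite -koszul_dE dF.
have yh T : y T \is d.-1.-homog by rewrite rpredZ // khtp_dhomog.
exists (block_correction d.-1 y); split; last first.
  by move=> T; rewrite koszul_dE kdiff_block_correction dy.
apply/koszul_chainE; first by lia.
split.
- by apply: block_correction_on => S hS; rewrite /y /klift (khtp_on _ Fi hS) scaler0.
- by rewrite subnS; apply: block_correction_dhomog => //; rewrite /d; lia.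
- by apply: block_correction_ideal => // [|S]; [rewrite /d; lia | rewrite dy].
Qed.

Lemma block_ideal_reg_bound : reg_bound block_ideal 2.
Proof. by move=> i j ij; apply: block_ideal_tor_vanishes; lia. Qed.

Hypothesis blk_cover : forall v, exists c, blk c v.

Lemma block_ideal_dhomog1 p : p \is 1.-homog -> block_ideal p -> p = 0.
Proof.
move=> hp /block_idealE Ip; apply/mpolyP => m; rewrite mcoeff0.
have [//|p_m] := eqVneq p@_m 0.
have /mdeg1P[v /eqP m_v] : mdeg m == 1%N.
  by rewrite (dhomog_mf hp) ?mcoeff_msupp.
have [c cv] := blk_cover v.
have := congr1 (mcoeff m) (Ip c); rewrite mcoeff_mpart mcoeff0.
suff -> : mnm_within (blk c) m by [].
by apply/forallP => w; rewrite m_v mnm1E; case: (eqVneq v w) => [<-|].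
Qed.

Lemma block_ideal_tor02 a b ca cb :
  ca != cb -> blk ca a -> blk cb b -> ~ tor_vanishes block_ideal 0 2.
Proof.
move=> cab ha hb tv.
have abI : block_ideal ('X_a * 'X_b).
  apply/block_idealE => c; rewrite -[X in _ * X]mulr1 !mpart_Xmul.
  case: ifP => [ca'|]; last by [].
  case: ifP => [cb'|]; last by rewrite mulr0.
  by rewrite (blk_disjoint ha ca') (blk_disjoint hb cb') eqxx in cab.
have ab2 : ('X_a * 'X_b : R) \is 2.-homog.
  by rewrite -[X in _ * X]mulr1 !dhomog_Xmul ?dhomog1.
pose F (S : {set 'I_N}) : R := if S == set0 then 'X_a * 'X_b else 0.
have Fchain : koszul_chain block_ideal 0 2 F.
  apply/koszul_chainE => //; split=> S; rewrite /F.
  - by rewrite cards_eq0 => /negbTE->.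
  - by case: ifP => _; rewrite subn0 ?rpred0.
  - by case: ifP => // _; apply/block_idealE => c; rewrite raddf0.
have Fcycle : koszul_d F =1 (fun=> 0).
  move=> T; apply: big1 => k _; rewrite /F.
  have /negbTE-> : k |: T != set0 by apply/set0Pn; exists k; rewrite setU11.
  by rewrite mulr0.
have [G [/koszul_chainE-/(_ isT) [_ Gh GI] dG]] := tv F Fchain Fcycle.
have := dG set0; rewrite /F eqxx koszul_dE (eq_kdiff _ (F' := fun=> 0)) ?kdiff0.
  move/(congr1 (mcoeff (U_(a) + U_(b))%MM)).
  by rewrite -mpolyXD mcoeffX eqxx mcoeff0 => /eqP; rewrite eq_sym oner_eq0.
by move=> S; apply: block_ideal_dhomog1.
Qed.

Lemma block_ideal_reg_ge2 a b ca cb s :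
  ca != cb -> blk ca a -> blk cb b -> reg_bound block_ideal s -> (2 <= s)%R.
Proof.
move=> cab ha hb reg; rewrite leNgt; apply/negP => s_lt2.
by apply: (block_ideal_tor02 cab ha hb); apply: reg; lia.
Qed.

End BlockIdeal.

Lemma in_block_disjoint n (b c : 'I_3) (v : 'I_(3 * n)) :
  in_block b v -> in_block c v -> b = c.
Proof.
case/existsP => i /eqP -> /existsP[i' /eqP].
by move/cast_ord_inj/enum_rank_inj => [].
Qed.

Lemma in_block_cover n (v : 'I_(3 * n)) : exists c : 'I_3, in_block c v.
Proof. by case/mxvec_indexP: v => c i; exists c; apply/existsP; exists i. Qed.

Theorem mainTheorem7 (K : fieldType) (n : nat)
  (char0 : [pchar K] =i pred0) (n_pos : (0 < n)%N) :
  cm_regularity_is (@IA K n) 2.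
Proof.
change (cm_regularity_is (@block_ideal K _ _ (@in_block n)) 2).
have disj := @in_block_disjoint n.
split=> [|s]; first exact: (block_ideal_reg_bound disj char0).
pose i0 : 'I_n := Ordinal n_pos.
have x0 : in_block 0 (mxvec_index 0 i0) by apply/existsP; exists i0.
have y0 : in_block 1 (mxvec_index 1 i0) by apply/existsP; exists i0.
by apply: (block_ideal_reg_ge2 disj (@in_block_cover n) _ x0 y0).
Qed.
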